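(* Let $S'$ be a finite set of polynomials in $\mathbb{Q}[\alpha_1,\dots,\alpha_r]$, let $c\in\mathbb{Q}$ be a constant, and let $S=S'\cup\{c\}$. Then $S$ is compatibility graph reducible if and only if $S'$ is compatibility graph reducible.
   Context: A polynomial is called linear in a variable $x$ if its degree in $x$ is at most one (it may be constant in $x$). One reduction step. Let $T=\{f_1,\dots,f_m\}$ be a finite set of polynomials with rational coefficients, together with a graph $C$ on vertex set $T$ (its compatibility graph), and let $x$ be a variable. If some $f_i$ is not linear in $x$, the step is undefined. Otherwise write $f_i=g_ix+h_i$ with $g_i=\partial f_i/\partial x$ and $h_i=f_i|_{x=0}$. Let $S^1=\{g_i\}$, $S^2=\{h_i\}$, $S^3=\{g_ih_j-h_ig_j : i\neq j,\ f_if_j\in E(C)\}$, and let $T_{(x)}$ be the set of irreducible factors over $\mathbb{Q}$ of the polynomials in $S^1\cup S^2\cup S^3$. Each $q\in T_{(x)}$ receives a set of labels (2-element sets): the label $\{0,i\}$ if $q$ is an irreducible factor of $g_i$; the label $\{i,\infty\}$ if $q$ is an irreducible factor of $h_i$, and additionally the label $\{0,i\}$ if moreover $h_i=f_i$; the label $\{i,j\}$ if $q$ is an irreducible factor of $g_ih_j-h_ig_j\in S^3$. The new compatibility graph $C_{(x)}$ on vertex set $T_{(x)}$ has $qq'$ as an edge iff some label of $q$ and some label of $q'$ have nonempty intersection. Full reduction. Let $S\subseteq\mathbb{Q}[\alpha_1,\dots,\alpha_r]$ be finite and $\sigma$ a permutation of the variables; write $\sigma(i)$ for the $i$-th variable in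 the order. Let $(S_{[\sigma(1)]},C_{[\sigma(1)]})$ be the result of one reduction step with variable $\sigma(1)$ applied to $S$ with the complete graph as compatibility graph. For $k\ge 2$ define inductively $S_{[\sigma(1),\dots,\sigma(k)]}=\bigcap_{1\le i\le k} S_{[\sigma(1),\dots,\widehat{\sigma(i)},\dots,\sigma(k)](\sigma(i))}$, where the subscript $(\sigma(i))$ means one reduction step with variable $\sigma(i)$ applied to the set $S_{[\sigma(1),\dots,\widehat{\sigma(i)},\dots,\sigma(k)]}$ with its compatibility graph; in these intersections polynomials differing by a nonzero constant factor are identified. The compatibility graph $C_{[\sigma(1),\dots,\sigma(k)]}$ has $fg$ as an edge iff $fg$ is an edge of every $C_{[\sigma(1),\dots,\widehat{\sigma(i)},\dots,\sigma(k)](\sigma(i))}$. $S$ is compatibility graph reducible with respect to $\sigma$ if for all $1\le i\le r-1$ the set $S_{[\sigma(1),\dots,\sigma(i)]}$ is defined and all its polynomials are linear in $\sigma(i+1)$. $S$ is compatibility graph reducible if it is so with respect to some permutation $\sigma$. *)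

From HB Require Import structures.
From mathcomp Require Import all_boot all_order all_algebra all_fingroup.
From mathcomp Require Import finmap.
From mathcomp Require Import mpoly.
Set Implicit Arguments. Unset Strict Implicit. Unset Printing Implicit Defensive.
Import GRing.Theory.
Local Open Scope ring_scope.

(* Polynomials in Q[alpha_1, ..., alpha_r]; the variable alpha_(i+1) is 'X_i, i : 'I_r. *)
Notation qpoly r := {mpoly rat[r]}.

Section CGR.
Variable r : nat.
Implicit Types (f g h p q : qpoly r) (x : 'I_r).

Definition is_const p : Prop := exists c : rat, p = c%:MP.

(* irreducibility over Q: p is not constant (so p <> 0 and p not a unit) and
   any factorization has a constant factor *)
Definition irreducible_mp p : Prop :=
  ~ is_const p /\ forall a b : qpoly r, p = a * b -> is_const a \/ is_const b.

Definition irr_factor q p : Prop :=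
  p <> 0 /\ irreducible_mp q /\ exists d : qpoly r, p = q * d.

Definition linear_in x f : Prop := forall m, m \in msupp f -> (m x <= 1)%N.

(* g = df/dx and h = f|_{x=0} *)
Definition gpart x f : qpoly r := f^`M(x).
Definition hpart x f : qpoly r :=
  f \mPo [tuple (if j == x then 0 else 'X_j) | j < r].

(* a set of polynomials with a compatibility graph, together with a Prop
   recording whether it is defined *)
Record red_state := RedState {
  rdef : Prop;
  rset : qpoly r -> Prop;
  redge : qpoly r -> qpoly r -> Prop }.

(* the elements of labels: 0, infinity, or an index (an element of T) *)
Inductive point := PZero | PInf | PIdx of qpoly r.

(* (a, b) stands for the 2-element label {a, b} of q, for the reduction step
   w.r.t. x applied to (T, C) *)
Definition has_label (A : red_state) x q (a b : point) : Prop :=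
  (exists fi, rset A fi /\ irr_factor q (gpart x fi) /\ a = PZero /\ b = PIdx fi)
  \/ (exists fi, rset A fi /\ irr_factor q (hpart x fi) /\ a = PIdx fi /\ b = PInf)
  \/ (exists fi, rset A fi /\ irr_factor q (hpart x fi) /\ hpart x fi = fi
                 /\ a = PZero /\ b = PIdx fi)
  \/ (exists fi fj, rset A fi /\ rset A fj /\ fi <> fj /\ redge A fi fj /\
        irr_factor q (gpart x fi * hpart x fj - hpart x fi * gpart x fj)
        /\ a = PIdx fi /\ b = PIdx fj).

Definition labels_meet (a b a' b' : point) : Prop :=
  a = a' \/ a = b' \/ b = a' \/ b = b'.

Definition red_step (A : red_state) x : red_state := {|
  rdef := rdef A /\ (forall f, rset A f -> linear_in x f);
  rset := fun q =>
    (exists fi, rset A fi /\ irr_factor q (gpart x fi))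
    \/ (exists fi, rset A fi /\ irr_factor q (hpart x fi))
    \/ (exists fi fj, rset A fi /\ rset A fj /\ fi <> fj /\ redge A fi fj /\
          irr_factor q (gpart x fi * hpart x fj - hpart x fi * gpart x fj));
  redge := fun q q' => exists a b a' b',
    has_label A x q a b /\ has_label A x q' a' b' /\ labels_meet a b a' b' |}.

(* Since all sets
   produced by a reduction step consist of all irreducible factors (closed under
   multiplication by nonzero constants), plain intersection realises
   "intersection up to nonzero constant factors". *)
Definition red_cap (L : seq 'I_r) (F : 'I_r -> red_state) : red_state := {|
  rdef := forall y, y \in L -> rdef (red_step (F y) y);
  rset := fun q => forall y, y \in L -> rset (red_step (F y) y) q;
  redge := fun q q' => forall y, y \in L -> redge (red_step (F y) y) q q' |}.

Definition init_state (S : seq (qpoly r)) : red_state :=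
  {| rdef := True; rset := fun f => f \in S; redge := fun _ _ => True |}.

(* red_full S n L, with n = size L and L = [sigma(1); ...; sigma(k)] duplicate-free,
   is S_[sigma(1),...,sigma(k)] (with its graph and definedness); for k = 1 it is
   the single reduction step applied to S with the complete graph. *)
Fixpoint red_full (S : seq (qpoly r)) (n : nat) (L : seq 'I_r) : red_state :=
  match n with
  | O => init_state S
  | n'.+1 => red_cap L (fun y => red_full S n' (rem y L))
  end.

Definition S_red (S : seq (qpoly r)) (L : seq 'I_r) : red_state :=
  red_full S (size L) L.

(* S is compatibility graph reducible w.r.t. sigma: for all 1 <= i <= r-1 (here
   i : 'I_r with 0 < i), S_[sigma(1),...,sigma(i)] is defined and all of its
   polynomials are linear in sigma(i+1) (0-indexed: sigma i). *)
Definition cg_reducible_wrt (S : seq (qpoly r)) (sigma : {perm 'I_r}) : Prop :=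
  forall i : 'I_r, (0 < i)%N ->
    let L := map sigma [seq j <- enum 'I_r | (nat_of_ord j < nat_of_ord i)%N] in
    rdef (S_red S L) /\ (forall f, rset (S_red S L) f -> linear_in (sigma i) f).

Definition cg_reducible (S : seq (qpoly r)) : Prop :=
  exists sigma : {perm 'I_r}, cg_reducible_wrt S sigma.

End CGR.

From HB Require Import structures.
From mathcomp Require Import all_boot all_order all_algebra all_fingroup.
From mathcomp Require Import finmap.
From mathcomp Require Import mpoly.
From mathcomp Require Import zify.
From Stdlib Require Import FunctionalExtensionality PropExtensionality.
Set Implicit Arguments. Unset Strict Implicit. Unset Printing Implicit Defensive.
Import GRing.Theory.
Local Open Scope ring_scope.

(* A constant c is linear in every variable and contributes nothing new to a
   reduction step: g = 0 and h = c have no irreducible factors, and its cross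
   term with f_j is a scalar multiple of g_j, so its irreducible factors already
   carry the label {0, j}. Renaming the index c to 0 therefore maps every label
   of the step with c to a label of the step without c, preserving intersecting
   labels; hence the first reduction step, and by induction every later one, is
   the same with or without c. *)

Section ConstantPolynomials.
Variables (r : nat) (x : 'I_r) (c : rat).
Implicit Types (f q : {mpoly rat[r]}).

Lemma linear_inC : linear_in x (c%:MP : {mpoly rat[r]}).
Proof.
move=> m; rewrite msuppC; case: (c == 0) => //.
by rewrite inE => /eqP ->; rewrite mnm0E.
Qed.

Lemma gpartC : gpart x (c%:MP : {mpoly rat[r]}) = 0.
Proof. exact: mderivC. Qed.

Lemma hpartC : hpart x (c%:MP : {mpoly rat[r]}) = c%:MP.
Proof. exact: comp_mpolyC. Qed.

Lemma irr_factor0 q : ~ irr_factor q 0.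
Proof. by case. Qed.

Lemma irr_factorC q : ~ irr_factor q c%:MP.
Proof.
case=> cP0 [[q_nconst _] [d cPE]]; apply: q_nconst.
have q0 : q != 0 by apply: contra_not_neq cP0 => q0; rewrite cPE q0 mul0r.
have d0 : d != 0 by apply: contra_not_neq cP0 => d0; rewrite cPE d0 mulr0.
have size_qd : (msize q + msize d).-1 = 1%N.
  rewrite -msizeM // -cPE; apply/eqP/msize_poly1P; exists c => //.
  by apply: contra_not_neq cP0 => ->.
have : msize d != 0%N by rewrite msize_poly_eq0.
by exists q@_0; apply: msize1_polyC; lia.
Qed.

Lemma irr_factorZ q f (k : rat) : irr_factor q (k *: f) -> irr_factor q f.
Proof.
case=> kf0 [q_irr [d kfE]].
have k0 : k != 0 by apply/eqP => k0; apply: kf0; rewrite k0 scale0r.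
split; first by move=> f0; apply: kf0; rewrite f0 scaler0.
split => //; exists (k^-1 *: d).
by rewrite -scalerAr -kfE scalerA mulVf // scale1r.
Qed.

Lemma irr_factor_crossCl q f :
  irr_factor q (gpart x c%:MP * hpart x f - hpart x c%:MP * gpart x f) ->
  irr_factor q (gpart x f).
Proof.
by rewrite gpartC hpartC mul0r sub0r mul_mpolyC -scaleNr => /irr_factorZ.
Qed.

Lemma irr_factor_crossCr q f :
  irr_factor q (gpart x f * hpart x c%:MP - hpart x f * gpart x c%:MP) ->
  irr_factor q (gpart x f).
Proof.
by rewrite gpartC hpartC mulr0 subr0 mulrC mul_mpolyC => /irr_factorZ.
Qed.

End ConstantPolynomials.

Section RedStep.
Variable r : nat.
Implicit Types (A B : red_state r) (f q : {mpoly rat[r]}) (x : 'I_r) (a b : point r).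

Lemma rset_red_stepP A x q :
  rset (red_step A x) q <-> exists a b, has_label A x q a b.
Proof.
split.
- case=> [[f [Af fq]] | [[f [Af fq]] | [f [g [Af [Ag [fg [efg fgq]]]]]]]].
  + by exists (PZero r), (PIdx f); left; exists f.
  + by exists (PIdx f), (PInf r); right; left; exists f.
  + by exists (PIdx f), (PIdx g); right; right; right; exists f, g.
- move=> [a [b]].
  case=> [[f [? [? _]]] | [[f [? [? _]]] | [[f [? [? _]]] | [f [g [? [? [? [? [? _]]]]]]]]]].
  + by left; exists f.
  + by right; left; exists f.
  + by right; left; exists f.
  + by right; right; exists f, g.
Qed.

Lemma labels_meet_map (d : point r -> point r) a b a' b' :
  labels_meet a b a' b' -> labels_meet (d a) (d b) (d a') (d b').
Proof. by case=> [|[|[|]]] ->; rewrite /labels_meet; auto. Qed.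

Definition sub_state B A :=
  (forall f, rset B f -> rset A f) /\ (forall f g, redge B f g -> redge A f g).

Lemma has_label_sub B A x q a b :
  sub_state B A -> has_label B x q a b -> has_label A x q a b.
Proof.
move=> [BA BA_edge].
case=> [[f [? ?]] | [[f [? ?]] | [[f [? ?]] | [f [g [? [? [? [? ?]]]]]]]]].
- by left; exists f; split; first exact: BA.
- by right; left; exists f; split; first exact: BA.
- by right; right; left; exists f; split; first exact: BA.
- by right; right; right; exists f, g; do ![split; first by auto].
Qed.

Lemma redge_red_step_sub B A x q q' :
  sub_state B A -> redge (red_step B x) q q' -> redge (red_step A x) q q'.
Proof.
move=> BA [a [b [a' [b' [qab [q'ab' meet]]]]]].
by exists a, b, a', b'; do !split; try exact: has_label_sub BA _.
Qed.

Definition cons_state p B : red_state r :=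
  {| rdef := rdef B; rset := fun f => f = p \/ rset B f; redge := redge B |}.

Lemma init_state_cons p S : init_state (p :: S) = cons_state p (init_state S).
Proof.
congr RedState; apply: functional_extensionality => f.
by apply: propositional_extensionality; rewrite inE; split=> [/orP[/eqP|]|[->|->]];
  rewrite ?eqxx ?orbT; auto.
Qed.

Lemma sub_cons_state p B : sub_state B (cons_state p B).
Proof. by split=> *; [right|]. Qed.

Definition drop_idx p a : point r :=
  if a is PIdx f then (if f == p then PZero r else a) else a.

Section ConsConst.
Variable c : rat.
Local Notation C := (c%:MP : {mpoly rat[r]}).

Lemma has_label_cons_const B x q a b :
  has_label (cons_state C B) x q a b ->
  has_label B x q (drop_idx C a) (drop_idx C b) \/
  has_label B x q (drop_idx C b) (drop_idx C a).
Proof.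
have memB f : f = C \/ rset B f -> f != C -> rset B f by case=> [->|]; rewrite ?eqxx.
case=> [[f [Bf [fq [-> ->]]]] | [[f [Bf [fq [-> ->]]]] |
        [[f [Bf [fq [hf [-> ->]]]]] | [f [g [Bf [Bg [fg [efg [fgq [-> ->]]]]]]]]]]].
- have fC : f != C by apply: contraPneq fq => ->; rewrite gpartC; exact: irr_factor0.
  by left; rewrite /= (negbTE fC); left; exists f; auto.
- have fC : f != C by apply: contraPneq fq => ->; rewrite hpartC; exact: irr_factorC.
  by left; rewrite /= (negbTE fC); right; left; exists f; auto.
- have fC : f != C by apply: contraPneq fq => ->; rewrite hpartC; exact: irr_factorC.
  by left; rewrite /= (negbTE fC); right; right; left; exists f; auto.
- have [fE|fC] := eqVneq f C.
    subst f; have gC : g != C by apply/eqP => gE; apply: fg; rewrite gE.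
    left; rewrite /= eqxx (negbTE gC); left; exists g.
    by split; [exact: memB | split; first exact: irr_factor_crossCl fgq].
  have [gE|gC] := eqVneq g C.
    subst g; right; rewrite /= eqxx (negbTE fC); left; exists f.
    by split; [exact: memB | split; first exact: irr_factor_crossCr fgq].
  left; rewrite /= (negbTE fC) (negbTE gC); right; right; right; exists f, g.
  by split; [exact: memB | split; first exact: memB].
Qed.

Lemma redge_red_step_cons_const B x q q' :
  redge (red_step (cons_state C B) x) q q' -> redge (red_step B x) q q'.
Proof.
move=> [a [b [a' [b' [qab [q'ab' meet]]]]]].
have {}meet := labels_meet_map (drop_idx C) meet.
case: (has_label_cons_const qab) => ?; case: (has_label_cons_const q'ab') => ?;
  do 4 eexists; (split; [eassumption | split; [eassumption |]]);
  move: meet; rewrite /labels_meet; tauto.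
Qed.

Lemma red_step_cons_const B x : red_step (cons_state C B) x = red_step B x.
Proof.
have B_sub := sub_cons_state C B.
congr RedState.
- apply: propositional_extensionality; split=> -[defB linB]; split=> // f.
  + by move=> Bf; apply: linB; right.
  + by case=> [->|]; [exact: linear_inC | exact: linB].
- apply: functional_extensionality => q; apply: propositional_extensionality.
  split=> /rset_red_stepP [a [b qab]]; apply/rset_red_stepP.
  + by case: (has_label_cons_const qab); do 2 eexists; eassumption.
  + by exists a, b; exact: has_label_sub qab.
- do 2 apply: functional_extensionality => ?; apply: propositional_extensionality.
  by split; [exact: redge_red_step_cons_const | exact: redge_red_step_sub].
Qed.

End ConsConst.

Lemma eq_red_cap L (F G : 'I_r -> red_state r) :
  (forall y, red_step (F y) y = red_step (G y) y) -> red_cap L F = red_cap L G.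
Proof.
move=> FG; congr RedState.
- by apply: propositional_extensionality; split=> FL y /FL; rewrite FG.
- apply: functional_extensionality => q; apply: propositional_extensionality.
  by split=> FL y /FL; rewrite FG.
- do 2 apply: functional_extensionality => ?; apply: propositional_extensionality.
  by split=> FL y /FL; rewrite FG.
Qed.

Lemma cg_reducible_wrtE S (sigma : {perm 'I_r}) :
  cg_reducible_wrt S sigma =
  forall i : 'I_r, (0 < i)%N ->
    let L := map sigma [seq j <- enum 'I_r | (nat_of_ord j < nat_of_ord i)%N] in
    rdef (red_step (S_red S L) (sigma i)).
Proof. by []. Qed.

End RedStep.

Section ConsConstReduction.
Variables (r : nat) (S : seq {mpoly rat[r]}) (c : rat).

Lemma red_step_red_full_cons_const n L x :
  red_step (red_full (c%:MP :: S) n L) x = red_step (red_full S n L) x.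
Proof.
elim: n L x => [|n IH] L x /=; first by rewrite init_state_cons red_step_cons_const.
by rewrite (eq_red_cap L (fun y => IH (rem y L) y)).
Qed.

Lemma cg_reducible_wrt_cons_const sigma :
  cg_reducible_wrt (c%:MP :: S) sigma <-> cg_reducible_wrt S sigma.
Proof.
rewrite !cg_reducible_wrtE /S_red.
by split=> red i /red; rewrite red_step_red_full_cons_const.
Qed.

End ConsConstReduction.

Theorem proposition3p5 (r : nat) (S' : seq {mpoly rat[r]}) (c : rat) :
  cg_reducible (c%:MP :: S') <-> cg_reducible S'.
Proof.
by split=> -[sigma red]; exists sigma; apply/(cg_reducible_wrt_cons_const S' c sigma).
Qed.
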